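(* Let $F$ be a forest with $n$ vertices and $m$ connected components. Then $\tau_F(x)=x^m$.
   Context: For a weighted graph $(G,\omega)$ (a finite simple graph with $\omega:V(G)\to\{1,2,\dots\}$), $X_{(G,\omega)}=\sum_\kappa\prod_{v\in V(G)}x_{\kappa(v)}^{\omega(v)}$, summed over proper colourings $\kappa:V(G)\to\{1,2,\dots\}$; for an unweighted graph $G$, $X_G$ is this with $\omega\equiv1$. Let $P_n$ be the path on $n$ vertices and for a partition $\lambda$ let $P_\lambda$ be the disjoint union $P_{\lambda_1}\cup\dots\cup P_{\lambda_{\ell(\lambda)}}$. It is known that $\{X_{P_\lambda}\}_\lambda$ is a (multiplicative) basis of the algebra $\Lambda$ of symmetric functions over $\mathbb{Q}$. For $f=\sum_\lambda a_\lambda X_{P_\lambda}\in\Lambda$, the tree polynomial is $\tau_f(x)=\sum_\lambda a_\lambda x^{\ell(\lambda)}$, and $\tau_{(G,\omega)}:=\tau_{X_{(G,\omega)}}$, $\tau_G:=\tau_{X_G}$. *)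

From HB Require Import structures.
From mathcomp Require Import all_boot all_order all_algebra.
From mathcomp Require Import mpoly.
From Stdlib Require Import ClassicalEpsilon.
Set Implicit Arguments. Unset Strict Implicit. Unset Printing Implicit Defensive.
Import GRing.Theory.
Local Open Scope ring_scope.

Definition proper_col (T : finType) (e : rel T) (N : nat) (k : {ffun T -> 'I_N}) : bool :=
  [forall x, forall y, e x y ==> (k x != k y)].

(* X_G truncated to the variables x_1..x_N (colour i <-> variable 'X_i). *)
Definition chrom (T : finType) (e : rel T) (N : nat) : {mpoly rat[N]} :=
  \sum_(k : {ffun T -> 'I_N} | proper_col e k) \prod_(v : T) 'X_(k v).

(* A symmetric function is represented by its family of truncations to
   N variables, for all N (the map Lambda -> prod_N Lambda_N is injective). *)
Definition sym_fun := forall N : nat, {mpoly rat[N]}.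

Definition XG (T : finType) (e : rel T) : sym_fun := fun N => chrom e N.

Definition is_partition (l : seq nat) : bool :=
  sorted geq l && all (fun x => 0 < x)%N l.

(* the disjoint union of paths P_{l_1} u ... u P_{l_k} *)
Definition pathU_vert (l : seq nat) : finType :=
  {i : 'I_(size l) & 'I_(nth 0%N l i)}.

Definition pathU_rel (l : seq nat) : rel (pathU_vert l) :=
  fun u v => (tag u == tag v) &&
    (((nat_of_ord (tagged u)).+1 == nat_of_ord (tagged v))
     || ((nat_of_ord (tagged v)).+1 == nat_of_ord (tagged u))).

Definition XP (l : seq nat) : sym_fun := fun N => chrom (@pathU_rel l) N.

Definition path_comb (s : seq (seq nat * rat)) : sym_fun :=
  fun N => \sum_(p <- s) p.2 *: XP p.1 N.

Definition tau_comb (s : seq (seq nat * rat)) : {poly rat} :=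
  \sum_(p <- s) p.2 *: 'X^(size p.1).

Definition is_tree_poly (f : sym_fun) (q : {poly rat}) : Prop :=
  exists s : seq (seq nat * rat),
    [/\ all is_partition (map fst s), (forall N, f N = path_comb s N) & q = tau_comb s].

(* the tree polynomial (well defined since {X_{P_lambda}} is a basis) *)
Definition tau (f : sym_fun) : {poly rat} := epsilon (inhabits 0) (is_tree_poly f).

Definition tauG (T : finType) (e : rel T) : {poly rat} := tau (XG e).

Definition acyclic (T : finType) (e : rel T) : Prop :=
  ~ exists c : seq T, [/\ uniq c, (2 < size c)%N & cycle e c].

(* Two facts pin down tau_F.  First, X_G lies in the span of the X_{P_lambda}:
   expanding "proper" edge by edge (inclusion-exclusion) writes X_G as a
   combination of products of power sums p_c, one factor per component of a
   spanning subgraph, and p_c is in the span by induction on c, because the same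
   expansion for the path P_c is +-p_c plus products of p_c' with c' < c.
   Second, truncating to K+2 variables and setting them all to 1/(K+1) sends
   X_F, for a forest with n vertices and m components, to
   (K+2)^m (K+1)^(n-m) / (K+1)^n = r_K^m with r_K = (K+2)/(K+1); this is the
   leaf-removal count of proper colourings.  Any expansion of X_F therefore has
   tau(r_K) = r_K^m for infinitely many distinct r_K, whence tau_F = x^m. *)

From HB Require Import structures.
From mathcomp Require Import all_boot all_order all_algebra.
From mathcomp Require Import mpoly.
From Stdlib Require Import ClassicalEpsilon.
Set Implicit Arguments. Unset Strict Implicit. Unset Printing Implicit Defensive.

Section ForestLeaf.
Variables (T : finType) (e : rel T).
Hypotheses (e_sym : ssrbool.symmetric e) (e_irr : irreflexive e) (e_acyclic : acyclic e).

Lemma acyclic_path_return v u r w :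
  uniq [:: v, u & r] -> path e v (u :: r) -> e w v -> w \notin r.
Proof.
move=> U P ewv; apply/negP => wr; case/splitPr: wr U P => r1 r2 U P.
apply: e_acyclic.
exists [:: v, u & r1 ++ [:: w]]; split.
- by move: U; rewrite -(cat1s w r2) !catA -!cat_cons cat_uniq => /andP[].
- by rewrite /= size_cat addn1.
- move: P; rewrite /cycle -(cat1s w r2) catA -cat_cons cat_path => /andP[P _].
  by rewrite rcons_path P /= last_cat.
Qed.

Lemma forest_leaf x y : e x y -> exists v u, e v u /\ forall w, e v w -> w = u.
Proof.
move=> exy.
have [/existsP[v /existsP[u /andP[evu /forallP leaf]]]|nleaf] :=
  boolP [exists v, exists u, e v u && [forall w, e v w ==> (w == u)]].
  by exists v, u; split=> // w /(implyP (leaf w))/eqP.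
have other_nbr v u : e v u -> exists2 w, e v w & w != u.
  move: nleaf; rewrite negb_exists => /forallP/(_ v).
  rewrite negb_exists => /forallP/(_ u) /[swap] ->.
  by rewrite negb_forall => /existsP[w]; rewrite negb_imply => /andP[]; exists w.
have long_path n : exists v u r, [&& uniq [:: v, u & r], path e v (u :: r) & size r == n].
  elim: n => [|n [v [u [r /and3P[U P /eqP <-]]]]].
    exists y, x, [::]; rewrite /= e_sym exy !andbT inE.
    by apply: contraTneq exy => ->; rewrite e_irr.
  have [w evw wu] := other_nbr v u (andP P).1.
  have wv : w != v by apply: contraTneq evw => ->; rewrite e_irr.
  exists w, v, (u :: r); apply/and3P; split; last by [].
  - rewrite cons_uniq U andbT !inE negb_or wv (negPf wu) /=.
    by rewrite (acyclic_path_return U P) // e_sym.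
  - by rewrite /= e_sym evw.
have [v [u [r /and3P[U _ /eqP size_r]]]] := long_path #|T|.
have := max_card (mem [:: v, u & r]).
by rewrite (card_uniqP U) /= size_r => /ltnW; rewrite ltnn.
Qed.
End ForestLeaf.

Definition ffun_set (T : finType) (C : Type) (k : {ffun T -> C}) (v : T) (c : C) :=
  [ffun x => if x == v then c else k x].

Lemma big_ffun_set (R : Type) (idx : R) (op : Monoid.com_law idx)
    (T C : finType) (v : T) (z : C) (F : {ffun T -> C} -> R) :
  \big[op/idx]_(k : {ffun T -> C}) F k =
  \big[op/idx]_(k : {ffun T -> C} | k v == z) \big[op/idx]_(c : C) F (ffun_set k v c).
Proof.
rewrite (partition_big (fun k => ffun_set k v z) (fun k => k v == z)) /=; last first.
  by move=> k _; rewrite ffunE eqxx.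
apply: eq_bigr => k /eqP kvz.
rewrite (partition_big (fun k' : {ffun T -> C} => k' v) xpredT) //=.
apply: eq_bigr => c _; rewrite (big_pred1 (ffun_set k v c)) // => k' /=.
apply/andP/eqP => [[/eqP <- /eqP <-]|->].
  by apply/ffunP => x; rewrite !ffunE; case: eqP => // ->.
split; apply/eqP; last by rewrite ffunE eqxx.
by apply/ffunP => x; rewrite !ffunE; case: eqP => // ->.
Qed.

Lemma sum_nat_of_bool (I : finType) (P : pred I) : \sum_i (P i : nat) = #|P|.
Proof.
by rewrite -sum1_card [RHS]big_mkcond; apply: eq_bigr => i _; rewrite unfold_in; case: (P i).
Qed.

Definition n_proper_col (T : finType) (e : rel T) (K : nat) : nat :=
  \sum_(k : {ffun T -> 'I_K}) (proper_col e k : nat).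

Definition isolate (T : finType) (e : rel T) (v : T) : rel T :=
  [rel x y | [&& e x y, x != v & y != v]].

Section Isolate.
Variables (T : finType) (e : rel T) (v : T).

Lemma isolate_sym : ssrbool.symmetric e -> ssrbool.symmetric (isolate e v).
Proof. by move=> e_sym x y; rewrite /isolate /= e_sym (andbC (x != v)). Qed.

Lemma isolate_irr : irreflexive e -> irreflexive (isolate e v).
Proof. by move=> e_irr x; rewrite /isolate /= e_irr. Qed.

Lemma isolate_acyclic : acyclic e -> acyclic (isolate e v).
Proof.
move=> e_acyclic [c [U S C]]; apply: e_acyclic; exists c; split => //.
by apply: sub_cycle C => x y /andP[].
Qed.

Lemma card_edges_isolate u : e v u ->
  #|[set p : T * T | isolate e v p.1 p.2]| < #|[set p : T * T | e p.1 p.2]|.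
Proof.
move=> evu; apply: proper_card; apply/properP; split.
  by apply/subsetP => p; rewrite !inE => /andP[].
by exists (v, u); rewrite !inE /isolate /= ?eqxx ?andbF.
Qed.

Lemma proper_col_set_isolated K (k : {ffun T -> 'I_K}) c :
  proper_col (isolate e v) (ffun_set k v c) = proper_col (isolate e v) k.
Proof.
apply: eq_forallb => x; apply: eq_forallb => y; rewrite /isolate /=.
case: (boolP [&& e x y, x != v & y != v]) => // /and3P[_ xv yv].
by rewrite !ffunE (negPf xv) (negPf yv).
Qed.

Lemma n_comp_isolate_pred1 : ssrbool.symmetric e -> n_comp (isolate e v) (pred1 v) = 1.
Proof.
move=> e_sym; rewrite -(n_comp_connect (sym_connect_sym (isolate_sym e_sym)) v).
apply: eq_n_comp_r => x; rewrite !inE; apply/eqP/idP => [->|]; first exact: connect0.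
by case/connectP => [[|a p]] /= => [_ ->|/andP[/and3P[_ /negP]]].
Qed.

End Isolate.

Section Leaf.
Variables (T : finType) (e : rel T) (v u : T).
Hypotheses (e_sym : ssrbool.symmetric e) (e_irr : irreflexive e).
Hypotheses (evu : e v u) (leaf : forall w, e v w -> w = u).

Let uv : u != v. Proof. by apply: contraTneq evu => ->; rewrite e_irr. Qed.

Lemma proper_col_set_leaf K (k : {ffun T -> 'I_K}) c :
  proper_col e (ffun_set k v c) = proper_col (isolate e v) k && (c != k u).
Proof.
apply/idP/andP => [/forallP col|[/forallP col cku]].
  split; last by have := forallP (col v) u; rewrite evu !ffunE eqxx (negPf uv).
  apply/forallP => x; apply/forallP => y; apply/implyP => /and3P[exy xv yv].
  by have := forallP (col x) y; rewrite exy !ffunE (negPf xv) (negPf yv).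
apply/forallP => x; apply/forallP => y; apply/implyP => exy; rewrite !ffunE.
have [xv|xv] := eqVneq x v; first by subst x; rewrite (leaf exy) (negPf uv).
have [yv|yv] := eqVneq y v.
  by subst y; rewrite e_sym in exy; rewrite (leaf exy) eq_sym.
by have := forallP (col x) y; rewrite /isolate /= exy xv yv.
Qed.

Lemma n_proper_col_leaf K :
  K.+1 * n_proper_col e K.+1 = K * n_proper_col (isolate e v) K.+1.
Proof.
rewrite /n_proper_col !(big_ffun_set _ v ord0) !big_distrr /=.
apply: eq_bigr => k _.
under eq_bigr do rewrite proper_col_set_leaf.
under [in RHS]eq_bigr do rewrite proper_col_set_isolated.
rewrite sum_nat_const card_ord.
case: (proper_col (isolate e v) k) => /=; last by rewrite big1 ?muln0.
have -> : \sum_(c < K.+1) (c != k u : nat) = K.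
  by rewrite (sum_nat_of_bool (predC1 (k u))) cardC1 card_ord.
by rewrite muln1 mulnC.
Qed.

Let retract x := if x == v then u else x.

Lemma rel_adjunction_isolate_leaf : rel_adjunction retract (isolate e v) e [predC pred1 v].
Proof.
split=> [x|x y _].
  by rewrite !inE => /negPf xv; exists x; rewrite /retract xv connect0.
apply/idP/idP.
  case/connectP => p; elim: p x => [|a p IHp] x /=; first by move=> _ ->.
  case/andP => exa /IHp {}IHp /IHp; apply: connect_trans.
  rewrite /retract; have [xv|xv] := eqVneq x v.
    by move: exa; rewrite xv => /leaf ->; rewrite (negPf uv).
  have [av|av] := eqVneq a v.
    by move: exa; rewrite av e_sym => /leaf ->; exact: connect0.
  by apply: connect1; rewrite /isolate /= exa xv av.
have csym := sym_connect_sym e_sym.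
have retract_conn z : connect e z (retract z).
  by rewrite /retract; case: eqP => [->|_]; [apply: connect1|].
move=> conn_retract; apply: connect_trans (retract_conn x) _; rewrite csym.
apply: connect_trans (retract_conn y) _; rewrite csym.
by apply: connect_sub conn_retract => a b /and3P[eab _ _]; apply: connect1.
Qed.

Lemma n_comp_isolate_leaf : n_comp (isolate e v) T = (n_comp e T).+1.
Proof.
have csym' := sym_connect_sym (isolate_sym v e_sym).
rewrite (n_compC (pred1 v)) n_comp_isolate_pred1 // add1n; congr _.+1.
have closed_v : closed (isolate e v) [predC pred1 v].
  by move=> x y /and3P[_ xv yv]; rewrite !inE xv yv.
rewrite (adjunction_n_comp retract csym' (sym_connect_sym e_sym) closed_v
  rel_adjunction_isolate_leaf).
by apply: eq_n_comp_r => x; rewrite !inE /retract; case: (eqVneq x v).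
Qed.

End Leaf.

Lemma n_comp_le_card (T : finType) (e : rel T) : n_comp e T <= #|T|.
Proof. exact: max_card. Qed.

Section Edgeless.
Variables (T : finType) (e : rel T).
Hypothesis no_edge : forall x y, ~~ e x y.

Lemma n_proper_col_edgeless K : n_proper_col e K = K ^ #|T|.
Proof.
rewrite /n_proper_col (eq_bigr (fun _ => 1)) ?sum1_card ?card_ffun ?card_ord // => k _.
apply/eqP; rewrite eqb1; apply/forallP => x; apply/forallP => y.
by rewrite (negPf (no_edge x y)).
Qed.

Lemma n_comp_edgeless : n_comp e T = #|T|.
Proof.
apply: eq_card => x; rewrite !inE andbT; apply/eqP.
case/connectP: (connect_root e x) => [[|a p]] /=; first by move=> _ ->.
by rewrite (negPf (no_edge x a)).
Qed.

End Edgeless.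

Theorem n_proper_col_forest (T : finType) (e : rel T) K :
  ssrbool.symmetric e -> irreflexive e -> acyclic e ->
  n_proper_col e K.+1 = K.+1 ^ n_comp e T * K ^ (#|T| - n_comp e T).
Proof.
have [n] := ubnP #|[set p : T * T | e p.1 p.2]|.
elim: n e => // n IHn e lt_edges e_sym e_irr e_acyclic.
have [/existsP[x /existsP[y exy]]|] := boolP [exists x, exists y, e x y]; last first.
  rewrite negb_exists => /forallP no_edge.
  have {}no_edge x y : ~~ e x y by move: (no_edge x); rewrite negb_exists => /forallP.
  by rewrite n_proper_col_edgeless // n_comp_edgeless // subnn muln1.
have [v [u [evu leaf]]] := forest_leaf e_sym e_irr e_acyclic exy.
have := IHn (isolate e v) (leq_trans (card_edges_isolate evu) lt_edges)
  (isolate_sym v e_sym) (isolate_irr v e_irr) (isolate_acyclic e_acyclic).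
have := n_comp_le_card (isolate e v).
rewrite (n_comp_isolate_leaf e_sym e_irr evu leaf) => lt_comp IH.
apply/eqP; rewrite -(eqn_pmul2l (ltn0Sn K)) (n_proper_col_leaf e_sym e_irr evu leaf) IH.
by rewrite -(subnSK lt_comp) !expnS -!mulnA mulnCA [K * (_ * _)]mulnCA.
Qed.

Import GRing.Theory Num.Theory.
Local Open Scope ring_scope.

Lemma chrom_iso (T T' : finType) (e : rel T) (e' : rel T') (f : T -> T') N :
  bijective f -> {mono f : x y / e x y >-> e' x y} -> chrom e N = chrom e' N.
Proof.
case=> g fK gK ef; rewrite /chrom.
rewrite (reindex (fun k' : {ffun T' -> 'I_N} => [ffun x => k' (f x)])) /=; last first.
  apply: onW_bij; exists (fun k : {ffun T -> 'I_N} => [ffun y => k (g y)]).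
    by move=> k'; apply/ffunP => y; rewrite !ffunE gK.
  by move=> k; apply/ffunP => y; rewrite !ffunE fK.
apply: eq_big => k'.
  apply/forallP/forallP => col x; apply/forallP => y; apply/implyP => exy.
    by have := forallP (col (g x)) (g y); rewrite -ef !gK exy !ffunE !gK.
  by have := forallP (col (f x)) (f y); rewrite ef exy !ffunE.
move=> _; rewrite (reindex f) /=; last by apply: onW_bij; exists g.
by apply: eq_bigr => v _; rewrite ffunE.
Qed.

Definition sum_rel (T1 T2 : finType) (e1 : rel T1) (e2 : rel T2) : rel (T1 + T2) :=
  fun u v => match u, v with
  | inl a, inl b => e1 a b
  | inr a, inr b => e2 a b
  | _, _ => false
  end.

Lemma chrom_sum_rel (T1 T2 : finType) (e1 : rel T1) (e2 : rel T2) N :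
  chrom (sum_rel e1 e2) N = chrom e1 N * chrom e2 N.
Proof.
rewrite /chrom; symmetry; rewrite big_distrl /=; under eq_bigr do rewrite big_distrr /=.
rewrite pair_big_dep /=.
pose h (p : {ffun T1 -> 'I_N} * {ffun T2 -> 'I_N}) : {ffun T1 + T2 -> 'I_N} :=
  [ffun u => match u with inl a => p.1 a | inr b => p.2 b end].
rewrite (reindex h) /=; last first.
  apply: onW_bij; exists (fun k : {ffun T1 + T2 -> 'I_N} =>
    ([ffun a => k (inl a)], [ffun b => k (inr b)])).
    by case=> k1 k2; congr (_, _); apply/ffunP => a; rewrite !ffunE.
  by move=> k; apply/ffunP => [[a|b]]; rewrite !ffunE.
apply: eq_big => [[k1 k2]|[k1 k2] _] /=.
  apply/andP/forallP => [[/forallP col1 /forallP col2] [a|b]|col].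
  - by apply/forallP => [[c|c]] /=; rewrite ?ffunE //; exact: (forallP (col1 a) c).
  - by apply/forallP => [[c|c]] /=; rewrite ?ffunE //; exact: (forallP (col2 b) c).
  split; apply/forallP => x; apply/forallP => y; apply/implyP => exy.
    by have := forallP (col (inl x)) (inl y); rewrite /= exy !ffunE.
  by have := forallP (col (inr x)) (inr y); rewrite /= exy !ffunE.
by rewrite big_sumType /=; congr (_ * _); apply: eq_bigr => v _; rewrite ffunE.
Qed.

Lemma chrom_card0 (T : finType) (e : rel T) N : #|T| = 0%N -> chrom e N = 1.
Proof.
move=> /card0_eq T0; have F (x : T) : False by have := T0 x; rewrite inE.
pose k0 : {ffun T -> 'I_N} := [ffun x => match F x with end].
rewrite /chrom (big_pred1 k0); last first.
  move=> k /=; have -> : k == k0 by apply/eqP/ffunP => x; case: (F x).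
  by apply/forallP => x; case: (F x).
by rewrite big_pred0 // => x; case: (F x).
Qed.

Definition path_rel (c : nat) : rel 'I_c :=
  fun a b => (a.+1 == b :> nat) || (b.+1 == a :> nat).

Definition path_chrom (c N : nat) : {mpoly rat[N]} := chrom (@path_rel c) N.

Definition pathU_cons_vert x (l : seq nat) (u : 'I_x + pathU_vert l) : pathU_vert (x :: l) :=
  match u with
  | inl j => @Tagged 'I_(size (x :: l)) ord0 (fun i => 'I_(nth 0%N (x :: l) i)) j
  | inr w => @Tagged 'I_(size (x :: l)) (lift ord0 (tag w))
               (fun i => 'I_(nth 0%N (x :: l) i)) (tagged w)
  end.

Lemma card_pathU_vert l : #|pathU_vert l| = (\sum_(i < size l) nth 0%N l i)%N.
Proof.
rewrite card_tagged sumnE big_map big_enum /=.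
by apply: eq_bigr => i _; rewrite card_ord.
Qed.

Lemma pathU_cons_vert_bij x l : bijective (@pathU_cons_vert x l).
Proof.
apply: inj_card_bij; last first.
  by rewrite card_sum !card_pathU_vert card_ord /= big_ord_recl.
move=> [a|[i a]] [b|[j b]] /= E; have /= tagE := congr1 tag E.
- by move/eqP: E; rewrite eq_Tagged => /eqP /= ->.
- by have := neq_lift ord0 j; rewrite -tagE eqxx.
- by have := neq_lift ord0 i; rewrite tagE eqxx.
have ij := lift_inj tagE; subst j.
by move/eqP: E; rewrite eq_Tagged => /eqP /= ->.
Qed.

Lemma XP_cons x l N : XP (x :: l) N = path_chrom x N * XP l N.
Proof.
rewrite /XP /path_chrom -chrom_sum_rel; symmetry.
by apply: chrom_iso (pathU_cons_vert_bij x l) _ => [[a|[i a]] [b|[j b]]].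
Qed.

Lemma XP_prod l N : XP l N = \prod_(x <- l) path_chrom x N.
Proof.
elim: l => [|x l IHl]; last by rewrite XP_cons IHl big_cons.
by rewrite big_nil; apply: chrom_card0; rewrite card_pathU_vert big_ord0.
Qed.

Lemma path_rel_sym c : ssrbool.symmetric (@path_rel c).
Proof. by move=> a b; rewrite /path_rel orbC. Qed.

Lemma path_rel_irr c : irreflexive (@path_rel c).
Proof. by move=> a; rewrite /path_rel orbb eqn_leq ltnn. Qed.

Lemma uniq_cycle_nbrs (T : eqType) (e : rel T) (c : seq T) x :
  uniq c -> (2 < size c)%N -> cycle e c -> x \in c ->
  exists a b, [/\ a \in c, b \in c, a != b, e x a & e b x].
Proof.
move=> U size_c C /rot_to[i s rot_c].
have sub y : y \in s -> y \in c by move=> ys; rewrite -(mem_rot i) rot_c inE ys orbT.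
move: U C size_c; rewrite -(rot_uniq i) -(rot_cycle i) -(size_rot i) rot_c.
case: s rot_c sub => [|a s] // _ sub; case/lastP: s sub => [|s b] // sub.
rewrite /= rcons_path -cats1 cat_path last_cat /= => /andP[_].
move=> /andP[a_notin _] /and3P[exa _ ebx] _.
exists a, b; split=> //; try by apply: sub; rewrite ?inE ?mem_rcons ?inE ?eqxx ?orbT.
by apply: contraNneq a_notin => ->; rewrite mem_cat inE eqxx orbT.
Qed.

Lemma path_rel_acyclic c : acyclic (@path_rel c).
Proof.
move=> [s [U size_s C]].
have [x0 x0s] : exists x0, x0 \in s.
  by case: s size_s {U C} => // x0 s _; exists x0; rewrite inE eqxx.
case: (arg_maxnP val x0s) => M Ms Mmax.
have below y : y \in s -> path_rel M y -> y.+1 = M :> nat.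
  move=> ys; rewrite /path_rel => /orP[/eqP My|/eqP //].
  by have := Mmax y ys; rewrite /= -My ltnn.
have [a [b [sa sb ab eMa ebM]]] := uniq_cycle_nbrs U size_s C Ms.
move: ebM; rewrite path_rel_sym => /(below b sb) Mb.
move/(below a sa): eMa; rewrite -Mb => /succn_inj/val_inj ba.
by rewrite ba eqxx in ab.
Qed.

Lemma path_rel_connect c (c0 : (0 < c)%N) (y : 'I_c) : connect (@path_rel c) (Ordinal c0) y.
Proof.
case: y => j lt_jc; elim: j lt_jc => [|j IHj] lt_jc.
  by rewrite (bool_irrelevance lt_jc c0).
apply: connect_trans (IHj (ltnW lt_jc)) _; apply: connect1.
by rewrite /path_rel /= eqxx.
Qed.

Lemma n_comp_path_rel c : (0 < c)%N -> n_comp (@path_rel c) 'I_c = 1%N.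
Proof.
move=> c0; rewrite -(n_comp_connect (sym_connect_sym (@path_rel_sym c)) (Ordinal c0)).
by apply: eq_n_comp_r => y; rewrite !inE path_rel_connect.
Qed.

Lemma prod_nat_of_bool (R : comPzSemiRingType) (I : finType) (P : pred I) :
  \prod_i ((P i)%:R : R) = ([forall i, P i])%:R.
Proof.
case: (boolP [forall i, P i]) => [/forallP allP|/forallPn [i Pi]].
  by apply: big1 => i _; rewrite allP.
by rewrite (bigD1 i) //= (negbTE Pi) mul0r.
Qed.

Lemma scale_nat_of_bool (R : pzSemiRingType) (V : lSemiModType R) (b : bool) (v : V) :
  (b%:R : R) *: v = if b then v else 0.
Proof. by case: b; rewrite ?scale1r ?scale0r. Qed.

Section MonoSum.
Variable T : finType.
Implicit Types (S : {ffun T * T -> bool}) (D : {set T * T}).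

Definition mono_sum S N : {mpoly rat[N]} :=
  \sum_(k : {ffun T -> 'I_N} | [forall p, S p ==> (k p.1 == k p.2)]) \prod_v 'X_(k v).

Definition incl_excl_coef D S : rat :=
  \prod_p (if S p then (if p \in D then -1 else 0) else 1).

Lemma chrom_incl_excl (e : rel T) D N :
  (forall k : {ffun T -> 'I_N}, proper_col e k = [forall p in D, k p.1 != k p.2]) ->
  chrom e N = \sum_(S : {ffun T * T -> bool}) incl_excl_coef D S *: mono_sum S N.
Proof.
move=> col_D.
have col_sum (k : {ffun T -> 'I_N}) : ((proper_col e k)%:R : rat) =
    \sum_S incl_excl_coef D S * ([forall p, S p ==> (k p.1 == k p.2)])%:R.
  rewrite col_D -prod_nat_of_bool.
  transitivity (\prod_(p : T * T) \sum_(b : bool)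
     (if b then (if p \in D then -1 else 0) * ((k p.1 == k p.2)%:R : rat) else 1)).
    apply: eq_bigr => p _; rewrite big_bool /=.
    by case: (p \in D); case: (k p.1 == k p.2); rewrite /= ?mulr1 ?mulr0 ?add0r ?mulN1r ?addNr.
  rewrite bigA_distr_bigA /=; apply: eq_bigr => S _.
  rewrite /incl_excl_coef -prod_nat_of_bool -big_split /=; apply: eq_bigr => p _.
  by case: (S p); rewrite /= ?mulr1.
rewrite /chrom big_mkcond /=.
under eq_bigr do rewrite -scale_nat_of_bool col_sum scaler_suml.
rewrite exchange_big /=; apply: eq_bigr => S _.
rewrite /mono_sum scaler_sumr [RHS]big_mkcond /=; apply: eq_bigr => k _.
by rewrite -scalerA scale_nat_of_bool; case: ifP; rewrite ?scaler0.
Qed.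

Definition pairs_rel S : rel T := fun a b => S (a, b) || S (b, a).

Definition comp_card (R : rel T) (r : T) : nat := #|[set y | fingraph.root R y == r]|.

Definition power_sum (c N : nat) : {mpoly rat[N]} := \sum_(i < N) 'X_i ^+ c.

Lemma pairs_rel_sym S : ssrbool.symmetric (pairs_rel S).
Proof. by move=> a b; rewrite /pairs_rel orbC. Qed.

Lemma comp_card_gt0 (R : rel T) r : roots R r -> (0 < comp_card R r)%N.
Proof. by move=> rr; rewrite /comp_card card_gt0; apply/set0Pn; exists r; rewrite inE. Qed.

Lemma mono_col_rootE S N (k : {ffun T -> 'I_N}) :
  [forall p, S p ==> (k p.1 == k p.2)] = [forall v, k v == k (fingraph.root (pairs_rel S) v)].
Proof.
have csym := sym_connect_sym (pairs_rel_sym S).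
apply/forallP/forallP => [mono v|mono [a b]]; last first.
  apply/implyP => Sab /=; rewrite (eqP (mono a)) (eqP (mono b)).
  have /(fingraph.rootP csym) -> // : connect (pairs_rel S) a b.
  by apply: connect1; rewrite /pairs_rel Sab.
have k_conn x y : connect (pairs_rel S) x y -> k x = k y.
  case/connectP => p; elim: p x => [|a p IHp] x /=; first by move=> _ ->.
  case/andP => /orP[Sxa|Sax] /IHp {}IHp /IHp <-.
    exact/eqP/(implyP (mono (x, a))).
  exact/esym/eqP/(implyP (mono (a, x))).
by apply/eqP/k_conn/connect_root.
Qed.

Lemma prod_X_rootE (R : rel T) N (k : {ffun T -> 'I_N}) :
  connect_sym R -> (forall v, k v = k (fingraph.root R v)) ->
  \prod_v 'X_(k v) = \prod_(r | roots R r) 'X_(k r) ^+ comp_card R r :> {mpoly rat[N]}.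
Proof.
move=> csym k_root; under eq_bigr do rewrite k_root.
rewrite (partition_big (fingraph.root R) (roots R)) /=; last by move=> v _; apply: roots_root.
apply: eq_bigr => r /eqP rr.
rewrite (eq_bigr (fun _ => 'X_(k r))) => [|v /eqP ->] //.
by rewrite prodr_const /comp_card; congr (_ ^+ _); apply: eq_card => v; rewrite !inE.
Qed.

End MonoSum.

Lemma sum_supported_prod (T : finType) (P : pred T) (w : T -> nat) N :
  \sum_(k : {ffun T -> 'I_N.+1} | [forall v, ~~ P v ==> (k v == ord0)])
      \prod_(r | P r) 'X_(k r) ^+ w r
    = \prod_(r | P r) power_sum (w r) N.+1 :> {mpoly rat[N.+1]}.
Proof.
pose G v (j : 'I_N.+1) : {mpoly rat[N.+1]} := if P v then 'X_j ^+ w v else (j == ord0)%:R.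
transitivity (\prod_v \sum_(j < N.+1) G v j); last first.
  rewrite [LHS](bigID P) /= [X in _ * X]big1 ?mulr1 => [|v nPv]; last first.
    by rewrite /G (negPf nPv) (bigD1 ord0) //= big1 ?addr0 // => j /negPf ->.
  by apply: eq_bigr => v Pv; rewrite /power_sum; apply: eq_bigr => j _; rewrite /G Pv.
rewrite bigA_distr_bigA /= [LHS]big_mkcond /=; apply: eq_bigr => k _.
case: ifP => [/forallP k0|/negbT/forallPn [v]].
  rewrite [RHS](bigID P) /= [X in _ = _ * X]big1 ?mulr1 => [|v nPv]; last first.
    by rewrite /G (negPf nPv) (eqP (implyP (k0 v) nPv)) eqxx.
  by apply: eq_bigr => v Pv; rewrite /G Pv.
by rewrite negb_imply => /andP[nPv nz]; rewrite (bigD1 v) //= /G (negPf nPv) (negPf nz) mul0r.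
Qed.

Lemma mono_sum_prod (T : finType) (S : {ffun T * T -> bool}) N :
  mono_sum S N = \prod_(r | roots (pairs_rel S) r) power_sum (comp_card (pairs_rel S) r) N.
Proof.
set R := pairs_rel S; have csym := sym_connect_sym (pairs_rel_sym S).
rewrite /mono_sum (eq_bigl _ _ (@mono_col_rootE _ S N)).
case: N => [|N].
  have [x _|T0] := pickP (fun _ : T => true).
    rewrite big_pred0 => [|k]; last by case: (k x).
    by rewrite (bigD1 (fingraph.root R x)) ?roots_root //= /power_sum big_ord0 mul0r.
  have F (x : T) : False by have := T0 x.
  pose k0 : {ffun T -> 'I_0} := [ffun x => match F x with end].
  rewrite (big_pred1 k0) => [|k]; last first.
    have -> : k = k0 by apply/ffunP => x; case: (F x).
    by rewrite /= eqxx; apply/forallP => x; case: (F x).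
  by rewrite !big_pred0 // => x; case: (F x).
rewrite -sum_supported_prod.
rewrite (eq_bigr (fun k : {ffun T -> 'I_N.+1} =>
    \prod_(r | roots R r) 'X_(k r) ^+ comp_card R r)); last first.
  by move=> k /forallP k_root; apply: prod_X_rootE => // v; apply/eqP.
pose h (k : {ffun T -> 'I_N.+1}) := [ffun v => k (fingraph.root R v)].
pose h' (k : {ffun T -> 'I_N.+1}) := [ffun v => if roots R v then k v else ord0].
rewrite (reindex_onto h h') => [|k /forallP k_root]; last first.
  by apply/ffunP => v; rewrite !ffunE roots_root // -(eqP (k_root v)).
apply: eq_big => k; last by move=> _; apply: eq_bigr => r /eqP rr; rewrite ffunE rr.
have -> : [forall v, h k v == h k (fingraph.root R v)].
  by apply/forallP => v; rewrite !ffunE root_root.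
apply/eqP/forallP => [/ffunP hk v|k0].
  by apply/implyP => nr; have := hk v; rewrite !ffunE (negPf nr) => <-.
apply/ffunP => v; rewrite !ffunE; case: ifP => [/eqP -> //|/negbT nr].
exact/esym/eqP/(implyP (k0 v)).
Qed.

Definition in_path_span (f : sym_fun) : Prop :=
  exists s : seq (seq nat * rat),
    all is_partition (map fst s) /\ forall N, f N = path_comb s N.

Lemma in_path_span_ext (f g : sym_fun) :
  (forall N, f N = g N) -> in_path_span f -> in_path_span g.
Proof. by move=> fg [s [s_part fE]]; exists s; split => // N; rewrite -fg. Qed.

Lemma in_path_span0 : in_path_span (fun N => 0).
Proof. by exists [::]; split => // N; rewrite /path_comb big_nil. Qed.

Lemma in_path_span1 : in_path_span (fun N => 1).
Proof.
exists [:: ([::], 1)]; split => // N.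
by rewrite /path_comb big_seq1 scale1r XP_prod big_nil.
Qed.

Lemma in_path_spanD (f g : sym_fun) :
  in_path_span f -> in_path_span g -> in_path_span (fun N => f N + g N).
Proof.
move=> [s1 [s1_part fE]] [s2 [s2_part gE]]; exists (s1 ++ s2); split.
  by rewrite map_cat all_cat s1_part s2_part.
by move=> N; rewrite fE gE /path_comb big_cat.
Qed.

Lemma in_path_spanZ a (f : sym_fun) : in_path_span f -> in_path_span (fun N => a *: f N).
Proof.
move=> [s [s_part fE]]; exists [seq (p.1, a * p.2) | p <- s]; split.
  by rewrite -map_comp.
move=> N; rewrite fE /path_comb big_map scaler_sumr /=.
by apply: eq_bigr => p _; rewrite scalerA.
Qed.

Lemma is_partition_sort_cat l1 l2 :
  is_partition l1 -> is_partition l2 -> is_partition (sort geq (l1 ++ l2)).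
Proof.
move=> /andP[_ l1_pos] /andP[_ l2_pos].
rewrite /is_partition sort_sorted; last by move=> a b; apply: leq_total.
by rewrite (perm_all _ (permEl (perm_sort _ _))) all_cat l1_pos l2_pos.
Qed.

Lemma XP_sort_cat l1 l2 N : XP (sort geq (l1 ++ l2)) N = XP l1 N * XP l2 N.
Proof. by rewrite !XP_prod (perm_big _ (permEl (perm_sort _ _))) big_cat. Qed.

Lemma in_path_spanM (f g : sym_fun) :
  in_path_span f -> in_path_span g -> in_path_span (fun N => f N * g N).
Proof.
move=> [s1 [s1_part fE]] [s2 [s2_part gE]].
exists [seq (sort geq (pq.1.1 ++ pq.2.1), pq.1.2 * pq.2.2)
       | pq <- [seq (p, q) | p <- s1, q <- s2]].
split.
  rewrite -map_comp; apply/allP => _ /mapP[_ /allpairsP[[p q] [ps qs ->]] ->] /=.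
  by apply: is_partition_sort_cat; [apply: (allP s1_part) | apply: (allP s2_part)];
    apply: map_f.
move=> N; rewrite fE gE /path_comb big_map big_allpairs big_distrl /=.
apply: eq_bigr => p _; rewrite big_distrr /=; apply: eq_bigr => q _.
by rewrite XP_sort_cat -scalerAl -scalerAr scalerA mulrC.
Qed.

Lemma in_path_span_sum (I : Type) (r : seq I) (P : pred I) (F : I -> sym_fun) :
  (forall i, P i -> in_path_span (F i)) ->
  in_path_span (fun N => \sum_(i <- r | P i) F i N).
Proof.
move=> FP; elim: r => [|i r IHr].
  by apply: in_path_span_ext in_path_span0 => N; rewrite big_nil.
have [Pi|nPi] := boolP (P i); last first.
  by apply: in_path_span_ext IHr => N; rewrite big_cons (negPf nPi).
by apply: in_path_span_ext (in_path_spanD (FP i Pi) IHr) => N; rewrite big_cons Pi.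
Qed.

Lemma in_path_span_prod (I : Type) (r : seq I) (P : pred I) (F : I -> sym_fun) :
  (forall i, P i -> in_path_span (F i)) ->
  in_path_span (fun N => \prod_(i <- r | P i) F i N).
Proof.
move=> FP; elim: r => [|i r IHr].
  by apply: in_path_span_ext in_path_span1 => N; rewrite big_nil.
have [Pi|nPi] := boolP (P i); last first.
  by apply: in_path_span_ext IHr => N; rewrite big_cons (negPf nPi).
by apply: in_path_span_ext (in_path_spanM (FP i Pi) IHr) => N; rewrite big_cons Pi.
Qed.

Lemma in_path_span_path_chrom c : (0 < c)%N -> in_path_span (path_chrom c).
Proof.
move=> c0; exists [:: ([:: c], 1)]; split; first by rewrite /= /is_partition /= c0.
by move=> N; rewrite /path_comb big_seq1 scale1r XP_prod big_seq1.
Qed.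

Section PathEdges.
Variable c : nat.

Definition path_edges : {set 'I_c * 'I_c} := [set p : 'I_c * 'I_c | p.1.+1 == p.2 :> nat].

Definition path_edges_fun : {ffun 'I_c * 'I_c -> bool} := [ffun p => p \in path_edges].

Lemma proper_col_path_edges N (k : {ffun 'I_c -> 'I_N}) :
  proper_col (@path_rel c) k = [forall p in path_edges, k p.1 != k p.2].
Proof.
apply/forallP/forallP => [col [x y]|col x].
  apply/implyP; rewrite inE => xy.
  by apply: (implyP (forallP (col x) y)); rewrite /path_rel xy.
apply/forallP => y; apply/implyP => /orP[xy|yx].
  by apply: (implyP (col (x, y))); rewrite inE.
by rewrite eq_sym; apply: (implyP (col (y, x))); rewrite inE.
Qed.

Lemma incl_excl_coef_path_edges : incl_excl_coef path_edges path_edges_fun != 0.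
Proof.
apply/prodf_neq0 => p _; rewrite ffunE.
by case: (p \in path_edges); rewrite ?oppr_eq0 ?oner_eq0.
Qed.

Lemma mono_sum_path_edges N : (0 < c)%N -> mono_sum path_edges_fun N = power_sum c N.
Proof.
move=> c0; rewrite mono_sum_prod; set R := pairs_rel _.
have csym := sym_connect_sym (pairs_rel_sym path_edges_fun).
have R_path : R =2 @path_rel c by move=> a b; rewrite /R /pairs_rel !ffunE !inE.
have conn y : connect R (Ordinal c0) y by rewrite (eq_connect R_path) path_rel_connect.
have rootsE r : roots R r = (r == fingraph.root R (Ordinal c0)).
  apply/idP/eqP => [rr|->]; last exact: roots_root.
  by move/(fingraph.rootP csym): (conn r) => ->; apply/esym/eqP.
rewrite (big_pred1 (fingraph.root R (Ordinal c0))) // /comp_card.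
rewrite (_ : [set y | _ == _] = setT) ?cardsT ?card_ord //.
apply/setP => y; rewrite !inE; apply/eqP/(fingraph.rootP csym).
by rewrite csym; apply: conn.
Qed.

Lemma comp_card_lt_path (S : {ffun 'I_c * 'I_c -> bool}) r :
  (forall p, S p -> p \in path_edges) -> S != path_edges_fun ->
  (comp_card (pairs_rel S) r < c)%N.
Proof.
move=> S_sub S_neq; set R := pairs_rel S.
have [[a b] ab_edge nSab] : exists2 p, p \in path_edges & ~~ S p.
  apply/exists_inP; apply: contraNT S_neq => /exists_inPn all_S.
  apply/eqP/ffunP => p; rewrite ffunE.
  by apply/idP/idP => [/S_sub|/all_S/negPn].
move: ab_edge; rewrite inE => /eqP ab.
(* the missing edge (a, a+1) makes [0, a] a union of components *)
pose A := [pred v : 'I_c | (v <= a)%N].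
have S_A x y : S (x, y) -> (x \in A) = (y \in A).
  move=> Sxy; move: (S_sub _ Sxy); rewrite inE /= => /eqP xy.
  have xa : x != a :> nat.
    apply: contraNneq nSab => xa.
    have -> : a = x by apply: val_inj.
    by have -> : b = y by apply: val_inj; rewrite /= -ab -xy xa.
  by rewrite !inE -xy ltn_neqAle xa.
have A_closed : closed R A by move=> x y /orP[/S_A|/S_A ->].
have class_A y : fingraph.root R y == r -> (y \in A) = (r \in A).
  move=> /eqP ry; apply: closed_connect A_closed _ _ _.
  by rewrite -ry; apply: connect_root.
rewrite /comp_card -[X in (_ < X)%N]card_ord -cardsT; apply: proper_card; rewrite properT.
apply/negP => /eqP class_all.
have [rA|rA] := boolP (r \in A).
  have : b \in [set y | fingraph.root R y == r] by rewrite class_all inE.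
  by rewrite inE => /class_A; rewrite rA !inE -ab ltnn.
have : a \in [set y | fingraph.root R y == r] by rewrite class_all inE.
by rewrite inE => /class_A; rewrite (negPf rA) !inE leqnn.
Qed.

End PathEdges.

Lemma incl_excl_coef_eq0 (T : finType) (D : {set T * T}) (S : {ffun T * T -> bool}) p :
  S p -> p \notin D -> incl_excl_coef D S = 0.
Proof. by move=> Sp pD; rewrite /incl_excl_coef (bigD1 p) //= Sp (negPf pD) mul0r. Qed.

Lemma in_path_span_power_sum c : (0 < c)%N -> in_path_span (power_sum c).
Proof.
elim/ltn_ind: c => c IHc c0.
set D := path_edges c.
have rest_span : in_path_span (fun N =>
    \sum_(S | S != path_edges_fun c) incl_excl_coef D S *: mono_sum S N).
  apply: in_path_span_sum => S S_neq.
  have [S_sub|] := boolP [forall p, S p ==> (p \in D)]; last first.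
    case/forallPn => p; rewrite negb_imply => /andP[Sp pD].
    by apply: in_path_span_ext in_path_span0 => N; rewrite (incl_excl_coef_eq0 Sp pD) scale0r.
  apply: in_path_spanZ; apply: in_path_span_ext (fun N => esym (mono_sum_prod S N)) _.
  apply: in_path_span_prod => r rr; apply: IHc; last exact: comp_card_gt0.
  by apply: comp_card_lt_path S_neq => p; apply: (implyP (forallP S_sub p)).
have coef_neq0 := incl_excl_coef_path_edges c.
apply: in_path_span_ext (in_path_spanZ (incl_excl_coef D (path_edges_fun c))^-1
  (in_path_spanD (in_path_span_path_chrom c0) (in_path_spanZ (-1) rest_span))) => N.
rewrite /path_chrom (chrom_incl_excl (@proper_col_path_edges c N)).
rewrite (bigD1 (path_edges_fun c)) //=.
by rewrite mono_sum_path_edges // scaleN1r addrK scalerA mulVf // scale1r.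
Qed.

Lemma proper_col_edge_set (T : finType) (e : rel T) N (k : {ffun T -> 'I_N}) :
  proper_col e k = [forall p in [set p : T * T | e p.1 p.2], k p.1 != k p.2].
Proof.
apply/forallP/forallP => [col [x y]|col x].
  by apply/implyP; rewrite inE; apply: (implyP (forallP (col x) y)).
by apply/forallP => y; apply/implyP => exy; apply: (implyP (col (x, y))); rewrite inE.
Qed.

Lemma in_path_span_XG (T : finType) (e : rel T) : in_path_span (XG e).
Proof.
apply: in_path_span_ext (fun N => esym (chrom_incl_excl (@proper_col_edge_set T e N))) _.
apply: in_path_span_sum => S _; apply: in_path_spanZ.
apply: in_path_span_ext (fun N => esym (mono_sum_prod S N)) _.
by apply: in_path_span_prod => r rr; apply: in_path_span_power_sum; apply: comp_card_gt0.
Qed.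

Lemma meval_chrom (T : finType) (e : rel T) K (t : rat) :
  (chrom e K).@[fun _ => t] = (n_proper_col e K)%:R * t ^+ #|T|.
Proof.
rewrite /chrom rmorph_sum /= /n_proper_col natr_sum big_distrl /= big_mkcond /=.
apply: eq_bigr => k _; case: (proper_col e k); rewrite /= ?mul0r // mul1r rmorph_prod /=.
by rewrite (eq_bigr (fun _ => t)) => [|v _]; rewrite ?mevalXU // prodr_const cardE.
Qed.

Definition succ_ratio (K : nat) : rat := K.+2%:R / K.+1%:R.

Lemma succ_ratio_inj : injective succ_ratio.
Proof.
move=> a b; rewrite /succ_ratio => /eqP; rewrite eqr_div ?pnatr_eq0 // -!natrM eqr_nat.
by rewrite (mulSn a.+1) (mulSn b.+1) (mulnC b.+1) eqn_add2r eqSS => /eqP ->.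
Qed.

Lemma meval_forest (T : finType) (e : rel T) K :
  ssrbool.symmetric e -> irreflexive e -> acyclic e ->
  (chrom e K.+2).@[fun _ => K.+1%:R^-1] = succ_ratio K ^+ n_comp e T.
Proof.
move=> e_sym e_irr e_acyclic; rewrite meval_chrom n_proper_col_forest //.
have K1_neq0 : (K.+1%:R : rat) != 0 by rewrite pnatr_eq0.
rewrite natrM !natrX -{2}(subnK (n_comp_le_card e)) exprVn exprD invfM -mulrA.
by rewrite (mulrA (K.+1%:R ^+ _)) mulfV ?expf_neq0 // mul1r -exprVn -exprMn.
Qed.

Lemma meval_XP l K : all (fun x => 0 < x)%N l ->
  (XP l K.+2).@[fun _ => K.+1%:R^-1] = succ_ratio K ^+ size l.
Proof.
rewrite XP_prod rmorph_prod /=; elim: l => [|x l IHl] /=; first by rewrite big_nil.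
case/andP => x0 /IHl {}IHl; rewrite big_cons IHl exprS; congr (_ * _).
rewrite /path_chrom meval_forest ?n_comp_path_rel //.
- exact: path_rel_sym.
- exact: path_rel_irr.
- exact: path_rel_acyclic.
Qed.

Lemma poly_eq0_inj_roots (R : idomainType) (p : {poly R}) (f : nat -> R) :
  injective f -> (forall n, root p (f n)) -> p = 0.
Proof.
move=> f_inj p_root; apply/eqP; apply: contraT => p_neq0.
have := max_poly_roots p_neq0 (rs := map f (iota 0 (size p))).
rewrite size_map size_iota ltnn; apply; last by rewrite map_inj_uniq ?iota_uniq.
by apply/allP => x /mapP[n _ ->].
Qed.

Lemma tau_comb_forest (T : finType) (e : rel T) (s : seq (seq nat * rat)) :
  ssrbool.symmetric e -> irreflexive e -> acyclic e ->
  all is_partition (map fst s) -> (forall N, XG e N = path_comb s N) ->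
  tau_comb s = 'X^(n_comp e T).
Proof.
move=> e_sym e_irr e_acyclic s_part XGE; apply/eqP; rewrite -subr_eq0; apply/eqP.
apply: (poly_eq0_inj_roots succ_ratio_inj) => K.
rewrite rootE !hornerE /tau_comb horner_sum subr_eq0 -(meval_forest K e_sym e_irr e_acyclic).
rewrite -[chrom e _]/(XG e _) XGE /path_comb rmorph_sum /=.
apply/eqP/eq_big_seq => p ps.
rewrite mevalZ hornerZ hornerXn meval_XP //.
by have /andP[] := allP s_part _ (map_f fst ps).
Qed.

Theorem proposition3p2 (T : finType) (e : rel T) (n m : nat) :
  ssrbool.symmetric e -> irreflexive e -> acyclic e ->
  #|T| = n -> n_comp e T = m ->
  tauG e = 'X^m.
Proof.
move=> e_sym e_irr e_acyclic _ <-.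
have [s [s_part XGE]] := in_path_span_XG e.
have tau_exists : exists q, is_tree_poly (XG e) q by exists (tau_comb s), s.
rewrite /tauG /tau; have [s' [s'_part XGE' ->]] := epsilon_spec (inhabits 0) _ tau_exists.
exact: tau_comb_forest.
Qed.
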